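(* Let $A$ be a C*-algebra and let $S\subseteq A$ be $A$-invariant, i.e. $[SA]=[AS]$. Then $$\mathrm{Ann}^L_A(S)=\mathrm{Ann}^R_A(S)=\mathrm{Ann}^L_A(\langle S\rangle_A)=\mathrm{Ann}^R_A(\langle S\rangle_A).$$
   Context: For subsets $S,T$ of a C*-algebra $A$: $[S]$ denotes the closed linear span of $S$; $ST=\{st:s\in S,t\in T\}$; $\langle S\rangle_A=[ASA]$ is the closed two-sided ideal generated by $S$. The left annihilator is $\mathrm{Ann}^L_A(S)=\{x\in A: xs=0\ \forall s\in S\}$ and the right annihilator is $\mathrm{Ann}^R_A(S)=\{x\in A: sx=0\ \forall s\in S\}$. A subset $S\subseteq A$ is called $A$-invariant if $[SA]=[AS]$. *)

From HB Require Import structures.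
From mathcomp Require Import all_boot all_order all_algebra.
From mathcomp Require Import all_classical all_reals all_analysis.
From mathcomp Require Import complex.
Set Implicit Arguments. Unset Strict Implicit. Unset Printing Implicit Defensive.
Import Order.TTheory GRing.Theory Num.Theory.
Import numFieldNormedType.Exports.
Local Open Scope classical_set_scope.
Local Open Scope ring_scope.
Local Open Scope complex_scope.

Record is_cstar_algebra (R : realType) (A : completeNormedModType R[i])
    (mul : A -> A -> A) (star : A -> A) : Prop := {
  cs_mulA : forall x y z, mul x (mul y z) = mul (mul x y) z;
  cs_mulDl : forall x y z, mul (x + y) z = mul x z + mul y z;
  cs_mulDr : forall x y z, mul x (y + z) = mul x y + mul x z;
  cs_mulZl : forall (c : R[i]) x y, mul (c *: x) y = c *: mul x y;
  cs_mulZr : forall (c : R[i]) x y, mul x (c *: y) = c *: mul x y;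
  cs_norm_mul : forall x y, `|mul x y| <= `|x| * `|y|;
  cs_starK : forall x, star (star x) = x;
  cs_starD : forall x y, star (x + y) = star x + star y;
  cs_starZ : forall (c : R[i]) x, star (c *: x) = (c^*)%C *: star x;
  cs_starM : forall x y, star (mul x y) = mul (star y) (star x);
  cs_cstar : forall x, `|mul (star x) x| = `|x| ^+ 2
}.

Section Defs.
Variables (R : realType) (A : completeNormedModType R[i]) (mul : A -> A -> A).

Definition lin_span (S : set A) : set A :=
  [set x | exists n (c : 'I_n -> R[i]) (v : 'I_n -> A),
     (forall i, S (v i)) /\ x = \sum_(i < n) c i *: v i].

Definition cspan (S : set A) : set A := closure (lin_span S).

Definition setmul (S T : set A) : set A :=
  [set x | exists s t, S s /\ T t /\ x = mul s t].

(* <S>_A = [ASA] *)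
Definition gen_ideal (S : set A) : set A :=
  cspan (setmul (setmul setT S) setT).

Definition annL (S : set A) : set A := [set x | forall s, S s -> mul x s = 0].
Definition annR (S : set A) : set A := [set x | forall s, S s -> mul s x = 0].

Definition A_invariant (S : set A) : Prop :=
  cspan (setmul S setT) = cspan (setmul setT S).
End Defs.
Arguments lin_span {R A} S _.
Arguments cspan {R A} S _.
Arguments setmul {R A} mul S T _.
Arguments gen_ideal {R A} mul S _.
Arguments annL {R A} mul S _.
Arguments annR {R A} mul S _.
Arguments A_invariant {R A} mul S.

From mathcomp Require Import all_boot all_order all_algebra.
From mathcomp Require Import all_classical all_reals all_analysis.
From mathcomp Require Import complex.
Import Order.TTheory GRing.Theory Num.Theory.
Import numFieldNormedType.Exports.
Local Open Scope classical_set_scope.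
Local Open Scope ring_scope.

(* By the C*-identity, y y^* y = 0 forces y = 0.  So if x (a s) = 0 for all
   a in A and s in S, then (s x)(s x)^*(s x) = s (x ((s x)^* s)) x = 0 gives
   s x = 0: annL (AS) is contained in annR S, and dually annR (SA) in annL S.
   Left annihilators do not change when T is replaced by its closed linear span
   (multiplication is bounded and bilinear) or by TA (if y A = 0 then
   y y^* = 0, so y = 0).  Hence [SA] = [AS] yields annL S = annL (AS), while
   annL [ASA] = annL (AS) holds for any S; symmetrically on the right.  The
   right-handed facts are the left-handed ones in the opposite C*-algebra. *)

Lemma bounded_additive_continuous (K : numFieldType) (V W : normedModType K)
    (f : V -> W) (k : K) :
  0 < k -> {morph f : u v / u - v} -> (forall u, `|f u| <= k * `|u|) ->
  continuous f.
Proof.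
move=> k_gt0 fB fk u; apply/cvgrPdist_lt => e e_gt0; near=> v.
rewrite -fB (le_lt_trans (fk _)) // -ltr_pdivlMl //.
by near: v; apply: cvgr_dist_lt => //; rewrite mulr_gt0 ?invr_gt0.
Unshelve. all: by end_near.
Qed.

Lemma closed_kernel (K : numFieldType) (T : topologicalType)
    (V : normedModType K) (f : T -> V) :
  continuous f -> closed (f @^-1` [set 0]).
Proof.
move=> f_cont; apply: preimage_closed => [x _|]; first exact: f_cont.
exact/accessible_closed_set1/hausdorff_accessible/norm_hausdorff.
Qed.

Section Subsets.
Context {R : realType} {A : completeNormedModType R[i]}.
Implicit Types T K : set A.

Lemma sub_cspan T : T `<=` cspan T.
Proof.
move=> y Ty; apply: subset_closure.
exists 1%N, (fun=> 1), (fun=> y); split => //.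
by rewrite big_ord1 scale1r.
Qed.

Lemma cspan_sub T K : closed K -> K 0 ->
    (forall u v, K u -> K v -> K (u + v)) ->
    (forall (c : R[i]) u, K u -> K (c *: u)) ->
  T `<=` K -> cspan T `<=` K.
Proof.
move=> K_closed K0 KD KZ TK; rewrite [X in _ `<=` X](closure_id K).1 //.
apply: closureS => _ [n [c [v [Tv ->]]]].
by apply: big_ind => // i _; apply/KZ/TK.
Qed.

Lemma setmulA (mul : A -> A -> A) T1 T2 T3 : associative mul ->
  setmul mul (setmul mul T1 T2) T3 = setmul mul T1 (setmul mul T2 T3).
Proof.
move=> mulA; apply/seteqP; split=> ?.
  by move=> [_ [z [[x [y [T1x [T2y ->]]]] [T3z ->]]]]; exists x, (mul y z);
    split=> //; split; [by exists y, z | by rewrite mulA].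
by move=> [x [_ [T1x [[y [z [T2y [T3z ->]]]] ->]]]]; exists (mul x y), z;
  split; [by exists x, y | by rewrite mulA].
Qed.

Lemma setmul_op (mul : A -> A -> A) T1 T2 :
  setmul (fun x y => mul y x) T1 T2 = setmul mul T2 T1.
Proof.
by apply/seteqP; split=> _ [x [y [T1x [T2y ->]]]]; exists y, x.
Qed.

End Subsets.

Section CStarAlgebra.
Context {R : realType} {A : completeNormedModType R[i]}.
Context {mul : A -> A -> A} {star : A -> A} (HA : is_cstar_algebra mul star).
Implicit Types (x y : A) (T : set A).

Let mulA := cs_mulA HA.

Lemma cs_mul0l x : mul 0 x = 0.
Proof. by have := cs_mulZl HA 0 0 x; rewrite !scale0r. Qed.

Lemma cs_mul0r x : mul x 0 = 0.
Proof. by have := cs_mulZr HA 0 x 0; rewrite !scale0r. Qed.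

Lemma cs_star0 : star 0 = 0.
Proof. by have := cs_starZ HA 0 0; rewrite conjc0 !scale0r. Qed.

Lemma cs_mul_continuous x : continuous (mul x).
Proof.
apply: (@bounded_additive_continuous _ _ _ _ (`|x| + 1)).
- by rewrite ltr_wpDl.
- by move=> u v; rewrite (cs_mulDr HA) -scaleN1r (cs_mulZr HA) scaleN1r.
- move=> u; apply: le_trans (cs_norm_mul HA x u) _.
  by rewrite ler_wpM2r // lerDl.
Qed.

Lemma annL_cspan T : annL mul (cspan T) = annL mul T.
Proof.
apply/seteqP; split=> x xT; first by move=> t Tt; apply/xT/sub_cspan.
apply: (@cspan_sub _ _ T (mul x @^-1` [set 0])) => //.
- exact/closed_kernel/cs_mul_continuous.
- exact: cs_mul0r.
- by move=> u v /= xu xv; rewrite (cs_mulDr HA) xu xv addr0.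
- by move=> c u /= xu; rewrite (cs_mulZr HA) xu scaler0.
Qed.

Lemma norm_star x : `|star x| = `|x|.
Proof.
have le_norm_star y : `|y| <= `|star y|.
  have [->|y0] := eqVneq y 0; first by rewrite normr0 normr_ge0.
  rewrite -(@ler_pM2r _ `|y|) ?normr_gt0 // -expr2 -(cs_cstar HA).
  exact: cs_norm_mul HA _ _.
apply/le_anti/andP; split; last exact: le_norm_star.
by rewrite -{2}(cs_starK HA x); apply: le_norm_star.
Qed.

Lemma cstar_eq0 y : mul (star y) y = 0 -> y = 0.
Proof.
move=> yy0; apply/eqP.
by rewrite -normr_eq0 -sqrf_eq0 -(cs_cstar HA) yy0 normr0.
Qed.

Lemma cstar_cube_eq0 y : mul (mul y (star y)) y = 0 -> y = 0.
Proof.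
move=> y3; apply: cstar_eq0; set p := mul (star y) y.
have p_sa : star p = p by rewrite /p (cs_starM HA) (cs_starK HA).
by apply: cstar_eq0; rewrite p_sa /p -!mulA (mulA y) y3 cs_mul0r.
Qed.

Lemma cs_lmul_eq0 y : (forall b, mul y b = 0) -> y = 0.
Proof.
move=> y0; rewrite -(cs_starK HA y).
by rewrite (@cstar_eq0 (star y)) ?cs_star0 // (cs_starK HA).
Qed.

Lemma annL_mulT T : annL mul (setmul mul T setT) = annL mul T.
Proof.
apply/seteqP; split=> x xT.
  move=> t Tt; apply: cs_lmul_eq0 => b.
  by rewrite -mulA; apply: xT; exists t, b.
by move=> _ [t [b [Tt [_ ->]]]]; rewrite mulA xT // cs_mul0l.
Qed.

Lemma annL_Tmul_sub_annR T : annL mul (setmul mul setT T) `<=` annR mul T.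
Proof.
move=> x xT t Tt; apply: cstar_cube_eq0; set w := star (mul t x).
have -> : mul (mul (mul t x) w) (mul t x) = mul t (mul (mul x (mul w t)) x).
  by rewrite !mulA.
by rewrite xT ?cs_mul0l ?cs_mul0r //; exists w, t.
Qed.

Lemma annL_gen_ideal S :
  annL mul (gen_ideal mul S) = annL mul (setmul mul setT S).
Proof. by rewrite annL_cspan annL_mulT. Qed.

Lemma A_invariant_annL S :
  A_invariant mul S -> annL mul (setmul mul setT S) = annL mul S.
Proof. by move=> SA_AS; rewrite -annL_cspan -SA_AS annL_cspan annL_mulT. Qed.

End CStarAlgebra.

Lemma cstar_algebra_op {R : realType} {A : completeNormedModType R[i]}
    {mul : A -> A -> A} {star : A -> A} :
  is_cstar_algebra mul star -> is_cstar_algebra (fun x y => mul y x) star.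
Proof.
move=> HA; split.
- by move=> x y z; rewrite (cs_mulA HA).
- by move=> x y z; rewrite (cs_mulDr HA).
- by move=> x y z; rewrite (cs_mulDl HA).
- by move=> c x y; rewrite (cs_mulZr HA).
- by move=> c x y; rewrite (cs_mulZl HA).
- by move=> x y; rewrite mulrC (cs_norm_mul HA).
- exact: cs_starK HA.
- exact: cs_starD HA.
- exact: cs_starZ HA.
- by move=> x y; rewrite (cs_starM HA).
- by move=> x; rewrite -{1}(cs_starK HA x) (cs_cstar HA) (norm_star HA).
Qed.

Section RightAnnihilators.
Context {R : realType} {A : completeNormedModType R[i]}.
Context {mul : A -> A -> A} {star : A -> A} (HA : is_cstar_algebra mul star).
Implicit Types T S : set A.

Let HAop := cstar_algebra_op HA.

Lemma annR_cspan T : annR mul (cspan T) = annR mul T.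
Proof. exact: annL_cspan HAop T. Qed.

Lemma annR_Tmul T : annR mul (setmul mul setT T) = annR mul T.
Proof. by rewrite -setmul_op; apply: annL_mulT HAop T. Qed.

Lemma annR_mulT_sub_annL T : annR mul (setmul mul T setT) `<=` annL mul T.
Proof. by rewrite -setmul_op; apply: annL_Tmul_sub_annR HAop T. Qed.

Lemma annR_gen_ideal S :
  annR mul (gen_ideal mul S) = annR mul (setmul mul S setT).
Proof. by rewrite annR_cspan setmulA ?annR_Tmul //; apply: cs_mulA HA. Qed.

Lemma A_invariant_annR S :
  A_invariant mul S -> annR mul (setmul mul S setT) = annR mul S.
Proof. by move=> SA_AS; rewrite -annR_cspan SA_AS annR_cspan annR_Tmul. Qed.

End RightAnnihilators.

Theorem proposition2p5 (R : realType) (A : completeNormedModType R[i])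
    (mul : A -> A -> A) (star : A -> A)
    (HA : is_cstar_algebra mul star) (S : set A)
    (HS : A_invariant mul S) :
  annL mul S = annR mul S /\
  annR mul S = annL mul (gen_ideal mul S) /\
  annL mul (gen_ideal mul S) = annR mul (gen_ideal mul S).
Proof.
have annL_AS := A_invariant_annL HA S HS.
have annR_SA := A_invariant_annR HA S HS.
have annLR : annL mul S = annR mul S.
  apply/seteqP; split.
    by rewrite -annL_AS; apply: annL_Tmul_sub_annR HA S.
  by rewrite -annR_SA; apply: annR_mulT_sub_annL HA S.
by rewrite (annL_gen_ideal HA) (annR_gen_ideal HA) annL_AS annR_SA annLR.
Qed.
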